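(* Let $D$ be a division algebra and let $\sigma$ be an automorphism of $D$ such that the field $F=\mathcal{Z}(D)\cap D_\sigma$ is infinite. Then for every $n\ge 0$, the constant tuple $(\sigma,\ldots,\sigma)$ of length $n$ is automorphically normalizable over $D$; that is, every quotient ring of $D[t_1,\ldots,t_n;\sigma,\ldots,\sigma]$ by a proper two-sided ideal is automorphically normalizable over $D$.
   Context: All rings are associative with unity. $\mathcal{Z}(D)$ is the center of $D$ and $D_\sigma=\{r\in D:\sigma(r)=r\}$. For commuting automorphisms $\sigma_1,\ldots,\sigma_n$ of $D$, the skew polynomial ring $D[t_1,\ldots,t_n;\sigma_1,\ldots,\sigma_n]$ consists of polynomials $\sum r_{\mathbf i}t_1^{i_1}\cdots t_n^{i_n}$ ($r_{\mathbf i}\in D$) in pairwise commuting variables, with multiplication determined by $t_ia=\sigma_i(a)t_i$ for $a\in D$. For a ring $S\supseteq D$, an element $a\in S$ is automorphic over $D$ with respect to $\tau\in\mathrm{Aut}(D)$ if $ab=\tau(b)a$ for all $b\in D$. $S$ is finite over a subring $R$ if it is finitely generated as a left $R$-module. Commuting elements $a_1,\ldots,a_m\in S$ are (left) algebraically independent over $D$ if the monomials $a_1^{i_1}\cdots a_m^{i_m}$ are left linearly independent over $D$. $S$ is automorphically normalizable over $D$ if there exist $m\ge0$ and commuting elements $a_1,\ldots,a_m\in S$, automorphic over $D$ with respect to pairwise commuting automorphisms $\tau_1,\ldots,\tau_m$ of $D$, left algebraically independent over $D$, such that $S$ is finite over the subring $D[a_1,\ldots,a_m]$ generated by $D\cup\{a_1,\ldots,a_m\}$.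 A tuple $(\sigma_1,\ldots,\sigma_n)$ of commuting automorphisms is automorphically normalizable over $D$ if every quotient of $D[t_1,\ldots,t_n;\sigma_1,\ldots,\sigma_n]$ by a proper two-sided ideal is automorphically normalizable over $D$. *)

From HB Require Import structures.
From mathcomp Require Import all_boot all_order all_algebra.
Set Implicit Arguments. Unset Strict Implicit. Unset Printing Implicit Defensive.
Import GRing.Theory.
Local Open Scope ring_scope.

Definition division_ring (D : unitRingType) : Prop :=
  forall x : D, x != 0 -> x \is a GRing.unit.

Definition ring_aut (D : nzRingType) (f : {rmorphism D -> D}) : Prop := bijective f.

(* F = Z(D) ∩ D_sigma is infinite (no finite list exhausts it). *)
Definition center_fixed_infinite (D : nzRingType) (sigma : D -> D) : Prop :=
  forall s : seq D, exists2 c : D,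
    (forall r : D, c * r = r * c) /\ sigma c = c & c \notin s.

Definition monom (S : nzRingType) (m : nat) (a : 'I_m -> S) (e : 'I_m -> nat) : S :=
  \prod_(i < m) a i ^+ e i.

Definition commuting_family (S : nzRingType) (m : nat) (a : 'I_m -> S) : Prop :=
  forall i j, a i * a j = a j * a i.

Definition automorphic (D S : nzRingType) (phi : D -> S) (tau : D -> D) (a : S) : Prop :=
  forall b : D, a * phi b = phi (tau b) * a.

Definition alg_indep (D S : nzRingType) (phi : D -> S) (m : nat) (a : 'I_m -> S) : Prop :=
  forall (N : nat) (r : {ffun 'I_m -> 'I_N} -> D),
    \sum_(e : {ffun 'I_m -> 'I_N}) phi (r e) * monom a (fun i => nat_of_ord (e i)) = 0 ->
    forall e, r e = 0.

Definition in_gen_subring (D S : nzRingType) (phi : D -> S) (m : nat) (a : 'I_m -> S)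
  (s : S) : Prop :=
  forall P : S -> Prop,
    P 1 -> (forall x y, P x -> P y -> P (x - y)) -> (forall x y, P x -> P y -> P (x * y)) ->
    (forall d, P (phi d)) -> (forall i, P (a i)) -> P s.

Definition finite_over (S : nzRingType) (R : S -> Prop) : Prop :=
  exists g : seq S, forall s : S, exists c : 'I_(size g) -> S,
    (forall j, R (c j)) /\ s = \sum_(j < size g) c j * g`_j.

Definition aut_normalizable (D S : nzRingType) (phi : {rmorphism D -> S}) : Prop :=
  exists (m : nat) (a : 'I_m -> S) (tau : 'I_m -> {rmorphism D -> D}),
    (forall i, ring_aut (tau i)) /\
    (forall i j, tau i \o tau j =1 tau j \o tau i) /\
    commuting_family a /\
    (forall i, automorphic phi (tau i) (a i)) /\
    alg_indep phi a /\
    finite_over (in_gen_subring phi a).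

(* S (with the embedding phi : D -> S and elements x_1..x_n) is a quotient of
   D[t_1,...,t_n; sigma_1,...,sigma_n] by a two-sided ideal via t_i |-> x_i:
   the x_i commute, x_i d = sigma_i(d) x_i, and S is spanned as a left
   D-module by the monomials in the x_i (i.e. the induced map from the skew
   polynomial ring is onto).  Properness of the ideal is S being a nonzero
   ring (nzRingType). *)
Definition skew_poly_quotient (D S : nzRingType) (n : nat) (sigmas : 'I_n -> D -> D)
  (phi : {rmorphism D -> S}) (x : 'I_n -> S) : Prop :=
  [/\ commuting_family x,
      forall i, automorphic phi (sigmas i) (x i)
    & forall s : S, exists (N : nat) (r : {ffun 'I_n -> 'I_N} -> D),
        s = \sum_(e : {ffun 'I_n -> 'I_N}) phi (r e) * monom x (fun i => nat_of_ord (e i))].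

(* Nagata's change of variables.  Suppose the generators x_0, ..., x_k satisfy a
   nontrivial left relation sum_e r_e x^e = 0 with all exponents below N, of top
   total degree T.  For z in F put c_i = z^(N^i) for i < k, c_k = 1, and
   y_i = x_i - c_i x_k; since z is central and sigma-fixed, the y_i still commute
   and are sigma-automorphic.  Substituting x_i = y_i + c_i x_k, the relation reads
   u x_k^T + (lower powers of x_k with left coefficients in D[y]) = 0, where
   u = sum_{|e| = T} r_e z^(sum_{i<k} N^i e_i).  The Kronecker exponent
   e |-> sum_{i<k} N^i e_i is injective on exponents of a fixed total degree, so
   u = P(z) for a nonzero polynomial P; as F is infinite some z gives u <> 0, and u
   is then invertible.  So x_k^T is in the left D[y]-span of 1, ..., x_k^(T-1); as
   x_k normalizes D[y], this span contains D[x], i.e. D[x] is finite over D[y].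
   Induction on the number of generators and transitivity of finiteness finish. *)

From mathcomp Require Import all_boot all_order all_algebra.
From Stdlib Require Import Classical.
Set Implicit Arguments. Unset Strict Implicit. Unset Printing Implicit Defensive.
Import GRing.Theory.
Local Open Scope ring_scope.

Section LeftSpan.
Variable S : nzRingType.

Definition is_subring (R : S -> Prop) :=
  [/\ R 1, forall a b, R a -> R b -> R (a - b) & forall a b, R a -> R b -> R (a * b)].

Variable R : S -> Prop.
Hypothesis R_subring : is_subring R.

Lemma subring1 : R 1. Proof. by case: R_subring. Qed.

Lemma subringB a b : R a -> R b -> R (a - b). Proof. by case: R_subring => _ + _; apply. Qed.

Lemma subringM a b : R a -> R b -> R (a * b). Proof. by case: R_subring => _ _; apply. Qed.

Lemma subring0 : R 0. Proof. by rewrite -(subrr 1); apply: subringB; apply: subring1. Qed.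

Lemma subringN a : R a -> R (- a). Proof. by rewrite -sub0r; apply/subringB/subring0. Qed.

Lemma subringD a b : R a -> R b -> R (a + b).
Proof. by move=> Ra Rb; rewrite -[b]opprK; apply/subringB/subringN. Qed.

Definition lspan (g : seq S) (s : S) :=
  exists c : 'I_(size g) -> S, (forall j, R (c j)) /\ s = \sum_(j < size g) c j * g`_j.

Lemma lspan0 g : lspan g 0.
Proof.
exists (fun=> 0); split=> [j|]; first exact: subring0.
by rewrite big1 // => j _; rewrite mul0r.
Qed.

Lemma lspanD g s t : lspan g s -> lspan g t -> lspan g (s + t).
Proof.
move=> [c [Rc ->]] [d [Rd ->]]; exists (fun j => c j + d j); split=> [j|].
  exact: subringD.
by rewrite -big_split; apply: eq_bigr => j _; rewrite mulrDl.
Qed.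

Lemma lspan_mull g r s : R r -> lspan g s -> lspan g (r * s).
Proof.
move=> Rr [c [Rc ->]]; exists (fun j => r * c j); split=> [j|].
  exact: subringM.
by rewrite mulr_sumr; apply: eq_bigr => j _; rewrite mulrA.
Qed.

Lemma lspanN g s : lspan g s -> lspan g (- s).
Proof. by rewrite -mulN1r; apply/lspan_mull/subringN/subring1. Qed.

Lemma lspanB g s t : lspan g s -> lspan g t -> lspan g (s - t).
Proof. by move=> gs gt; apply/lspanD/lspanN. Qed.

Lemma lspan_sum g I (r : seq I) (P : pred I) (F : I -> S) :
  (forall i, P i -> lspan g (F i)) -> lspan g (\sum_(i <- r | P i) F i).
Proof. by move=> gF; apply: big_ind => //; [apply: lspan0 | apply: lspanD]. Qed.

Lemma lspan_nth g (j : 'I_(size g)) : lspan g g`_j.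
Proof.
exists (fun l => (l == j)%:R); split=> [l|].
  by case: eqP => _; [apply: subring1 | apply: subring0].
rewrite (bigD1 j) //= eqxx mul1r big1 ?addr0 // => l /negbTE->.
by rewrite mul0r.
Qed.

Lemma lspan_mem g v : v \in g -> lspan g v.
Proof.
by move=> gv; rewrite -(nth_index 0 gv); apply: (lspan_nth (Ordinal _)); rewrite index_mem.
Qed.

Lemma lspan_trans g1 g2 s :
  (forall j : 'I_(size g1), lspan g2 g1`_j) -> lspan g1 s -> lspan g2 s.
Proof. by move=> g12 [c [Rc ->]]; apply: lspan_sum => j _; apply/lspan_mull/g12. Qed.

End LeftSpan.

Definition finite_in (S : nzRingType) (A R : S -> Prop) :=
  exists g : seq S, forall s, A s -> lspan R g s.

Lemma finite_in_refl (S : nzRingType) (R : S -> Prop) : is_subring R -> finite_in R R.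
Proof.
move=> R_subring; exists [:: 1] => s Rs; exists (fun=> s); split=> //.
by rewrite big_ord1 mulr1.
Qed.

Lemma finite_in_trans (S : nzRingType) (A R1 R2 : S -> Prop) :
  is_subring R2 -> finite_in R1 R2 -> finite_in A R1 -> finite_in A R2.
Proof.
move=> R2_subring [g2 R12] [g1 A1]; exists [seq u * v | u <- g2, v <- g1].
move=> s /A1 [c [R1c ->]]; apply: lspan_sum => // j _.
have [d [R2d ->]] := R12 _ (R1c j).
rewrite mulr_suml; apply: lspan_sum => // l _; rewrite -mulrA.
apply: lspan_mull => //; apply: lspan_mem => //.
by apply: allpairs_f; apply: mem_nth.
Qed.

Section GeneratedSubring.
Variables (D S : nzRingType) (phi : D -> S) (m : nat) (a : 'I_m -> S).

Lemma in_gen_subring_subring : is_subring (in_gen_subring phi a).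
Proof.
split=> [P //| u v gu gv P P1 PB PM Pphi Pa | u v gu gv P P1 PB PM Pphi Pa].
  by apply: (PB); [apply: gu | apply: gv].
by apply: (PM); [apply: gu | apply: gv].
Qed.

Lemma in_gen_subring_phi d : in_gen_subring phi a (phi d).
Proof. by move=> P. Qed.

Lemma in_gen_subring_gen i : in_gen_subring phi a (a i).
Proof. by move=> P. Qed.

Lemma in_gen_subring_min (R : S -> Prop) :
  is_subring R -> (forall d, R (phi d)) -> (forall i, R (a i)) ->
  forall s, in_gen_subring phi a s -> R s.
Proof. by move=> [R1 RB RM] Rphi Ra s; apply. Qed.

Lemma in_gen_subring_monom (e : 'I_m -> nat) : in_gen_subring phi a (monom a e).
Proof.
have Gsub := in_gen_subring_subring.
apply: big_ind => [|u v|i _]; [exact: subring1 | exact: subringM |].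
elim: (e i) => [|l IHl]; first by rewrite expr0; apply: subring1.
by rewrite exprS; apply: (subringM Gsub) => //; apply: in_gen_subring_gen.
Qed.

Lemma in_gen_subring_skew_sum N (r : {ffun 'I_m -> 'I_N} -> D) :
  in_gen_subring phi a
    (\sum_(e : {ffun 'I_m -> 'I_N}) phi (r e) * monom a (fun i => nat_of_ord (e i))).
Proof.
have Gsub := in_gen_subring_subring.
apply: big_ind => [|u v|e _]; [exact: subring0 | exact: subringD |].
by apply: (subringM Gsub); [apply: in_gen_subring_phi | apply: in_gen_subring_monom].
Qed.

End GeneratedSubring.

Section PowerSpan.
Variables (S : nzRingType) (R : S -> Prop) (w : S).
Hypothesis R_subring : is_subring R.

Lemma left_normalized_subring :
  is_subring (fun r => exists2 r', R r' & w * r = r' * w).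
Proof.
split=> [|a b [a' Ra' wa] [b' Rb' wb]|a b [a' Ra' wa] [b' Rb' wb]].
- by exists 1; [apply: subring1 | rewrite mulr1 mul1r].
- by exists (a' - b'); [apply: subringB | rewrite mulrBr mulrBl wa wb].
- by exists (a' * b'); [apply: subringM | rewrite mulrA wa -mulrA wb mulrA].
Qed.

Hypothesis w_normalizes : forall r, R r -> exists2 r', R r' & w * r = r' * w.

Definition pspan t := lspan R (mkseq (GRing.exp w) t).

Lemma pspan_exp t j : (j < t)%N -> pspan t (w ^+ j).
Proof.
move=> lt_jt; have lt_j : (j < size (mkseq (GRing.exp w) t))%N by rewrite size_mkseq.
by have := lspan_nth R_subring (Ordinal lt_j); rewrite nth_mkseq.
Qed.

Lemma pspan_widen t t' s : (t <= t')%N -> pspan t s -> pspan t' s.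
Proof.
move=> le_tt'; apply: lspan_trans => // j.
have lt_jt : (j < t)%N := leq_trans (ltn_ord j) (eq_leq (size_mkseq _ _)).
by rewrite nth_mkseq //; apply: pspan_exp; apply: leq_trans le_tt'.
Qed.

Lemma pspan_mulw t s : pspan t s -> pspan t.+1 (w * s).
Proof.
move=> [c [Rc ->]]; rewrite mulr_sumr; apply: lspan_sum => // j _.
have lt_jt : (j < t)%N := leq_trans (ltn_ord j) (eq_leq (size_mkseq _ _)).
have [c' Rc' wc] := w_normalizes (Rc j).
by rewrite nth_mkseq // mulrA wc -mulrA -exprS; apply: lspan_mull => //; apply: pspan_exp.
Qed.

Lemma pspan_lead_mull t a0 a b u : R a0 -> R a -> R b -> GRing.comm w b ->
  pspan t (u - b * w ^+ t) -> pspan t.+1 ((a0 + a * w) * u - a * b * w ^+ t.+1).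
Proof.
move=> Ra0 Ra Rb wb; set l := u - b * w ^+ t => tl.
have -> : (a0 + a * w) * u - a * b * w ^+ t.+1 = a0 * l + a0 * b * w ^+ t + a * (w * l).
  rewrite /l !mulrBr !mulrA -(mulrA a w b) wb mulrDl exprS !mulrA.
  by rewrite subrK addrA.
apply: lspanD => //; first apply: lspanD => //.
- by apply: lspan_mull => //; apply: pspan_widen tl.
- by apply: lspan_mull (pspan_exp _) => //; apply: subringM.
- by apply: lspan_mull => //; apply: pspan_mulw.
Qed.

Section IntegralPower.
Variable T : nat.
Hypothesis wT : pspan T (w ^+ T).

Lemma pspan_mulw_closed s : pspan T s -> pspan T (w * s).
Proof.
move=> /pspan_mulw; apply: lspan_trans => // j.
have lt_jT : (j < T.+1)%N := leq_trans (ltn_ord j) (eq_leq (size_mkseq _ _)).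
rewrite nth_mkseq //; move: lt_jT; rewrite ltnS leq_eqVlt => /orP[/eqP-> //|].
exact: pspan_exp.
Qed.

Lemma pspan1 : pspan T 1.
Proof. by case: T wT => [|t] wt; [rewrite -(expr0 w) | apply: (pspan_exp (j := 0))]. Qed.

Lemma in_gen_subring_pspan (D : nzRingType) (phi : D -> S) m (x : 'I_m -> S) :
  (forall d, R (phi d)) -> (forall i, exists a0 a, [/\ R a0, R a & x i = a0 + a * w]) ->
  forall s, in_gen_subring phi x s -> pspan T s.
Proof.
(* The elements mapping the span into itself by left multiplication form a subring. *)
move=> Rphi x_lin s gs; rewrite -[s]mulr1; move: s gs 1 pspan1.
apply: in_gen_subring_min.
- split=> [u|a b Ta Tb u Tu|a b Ta Tb u Tu]; first by rewrite mul1r.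
    by rewrite mulrBl; apply: lspanB => //; [apply: Ta | apply: Tb].
  by rewrite -mulrA; apply/Ta/Tb.
- by move=> d u Tu; apply: lspan_mull.
- move=> i u Tu; have [a0 [a [Ra0 Ra ->]]] := x_lin i.
  rewrite mulrDl -mulrA; apply: lspanD => //; apply: lspan_mull => //.
  exact: pspan_mulw_closed.
Qed.

End IntegralPower.
End PowerSpan.

Definition central_fixed (D : nzRingType) (sigma : D -> D) (c : D) :=
  (forall r, c * r = r * c) /\ sigma c = c.

Section DivisionRing.
Variable D : unitRingType.
Hypothesis hD : division_ring D.

Lemma division_rmorph_eq0 (S : nzRingType) (phi : {rmorphism D -> S}) d :
  phi d = 0 -> d = 0.
Proof.
move=> phid0; apply/eqP; apply: contraT => /hD d_unit.
by rewrite -(oner_eq0 S) -(rmorph1 phi) -(mulVr d_unit) rmorphM phid0 mulr0.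
Qed.

Lemma alg_indep0 (S : nzRingType) (phi : {rmorphism D -> S}) (a : 'I_0 -> S) :
  alg_indep phi a.
Proof.
move=> N r + e; rewrite (bigD1 e) // big1 => [|e' /eqP[]]; last by apply/ffunP => -[].
by rewrite /monom big_ord0 mulr1 /= addr0 => /(division_rmorph_eq0 (phi := phi)).
Qed.

Variable sigma : {rmorphism D -> D}.
Hypothesis hF : center_fixed_infinite sigma.

Lemma central_fixed_seq m :
  exists s : seq D, [/\ size s = m, uniq s & forall c, c \in s -> central_fixed sigma c].
Proof.
elim: m => [|m [s [<- s_uniq sF]]]; first by exists [::].
have [c [cZ c_fixed] c_new] := hF s; exists (c :: s); rewrite /= c_new.
by split=> // c'; rewrite in_cons => /predU1P[-> //|/sF].
Qed.

Lemma uniq_roots_central_fixed (s : seq D) :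
  uniq s -> (forall c, c \in s -> central_fixed sigma c) -> uniq_roots s.
Proof.
elim: s => [//|c s IHs] /= /andP[c_new s_uniq] sF; apply/andP; split; last first.
  by apply: IHs => // c' sc'; apply: sF; rewrite in_cons sc' orbT.
apply/allP => c' sc'; apply/andP; split.
  by have [cZ _] := sF c (mem_head c s); apply/eqP; rewrite /GRing.comm cZ.
by apply: hD; rewrite subr_eq0; apply: contraNneq c_new => <-.
Qed.

Lemma exists_central_fixed_nonroot (P : {poly D}) :
  P != 0 -> exists2 z, central_fixed sigma z & P.[z] != 0.
Proof.
move=> P_neq0; have [s [s_size s_uniq sF]] := central_fixed_seq (size P).
have [allP_root | /allPn[z sz Pz]] := boolP (all (root P) s); last by exists z; [apply: sF|].
have := max_ring_poly_roots P_neq0 allP_root (uniq_roots_central_fixed s_uniq sF).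
by rewrite s_size ltnn.
Qed.

End DivisionRing.

Lemma big_ord_recr_lift (R : Type) (idx : R) (op : Monoid.law idx) n (F : 'I_n.+1 -> R) :
  \big[op/idx]_(i < n.+1) F i = op (\big[op/idx]_(i < n) F (lift ord_max i)) (F ord_max).
Proof.
rewrite big_ord_recr; congr (op _ _); apply: eq_bigr => i _.
by congr F; apply/val_inj/esym/lift_max.
Qed.

Lemma base_digits_inj N k (f g : 'I_k -> nat) :
  (forall i, f i < N)%N -> (forall i, g i < N)%N ->
  (\sum_(i < k) N ^ i * f i = \sum_(i < k) N ^ i * g i)%N -> f =1 g.
Proof.
elim: k f g => [|k IHk] f g fN gN; first by move=> _ [].
have N_gt0 : (0 < N)%N by apply: leq_ltn_trans (fN ord0).
have shift h : (\sum_(i < k) N ^ lift ord0 i * h (lift ord0 i)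
               = N * \sum_(i < k) N ^ i * h (lift ord0 i))%N.
  by rewrite big_distrr; apply: eq_bigr => i _; rewrite lift0 expnS /= mulnA.
rewrite !big_ord_recl !shift !mul1n => fg.
have fg0 : f ord0 = g ord0.
  have := congr1 (modn^~ N) fg; rewrite ![(_ + N * _)%N]addnC ![(N * _)%N]mulnC.
  by rewrite !modnMDl !modn_small.
move: fg; rewrite fg0 => /addnI /eqP; rewrite eqn_pmul2l // => /eqP fg.
move=> i; case: (unliftP ord0 i) => [j ->|-> //].
exact: (IHk _ _ (fun j => fN _) (fun j => gN _) fg).
Qed.

Section Kronecker.
Variables (D : nzRingType) (k N : nat) (r : {ffun 'I_k.+1 -> 'I_N} -> D).

Definition total_deg (e : {ffun 'I_k.+1 -> 'I_N}) := (\sum_i e i)%N.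

Definition kronecker (e : {ffun 'I_k.+1 -> 'I_N}) := (\sum_(j < k) N ^ j * e (lift ord_max j))%N.

Lemma kronecker_inj e e' : total_deg e = total_deg e' -> kronecker e = kronecker e' -> e = e'.
Proof.
move=> deg_ee' /(base_digits_inj (fun j => ltn_ord _) (fun j => ltn_ord _)) ee'.
move: deg_ee'; rewrite /total_deg !big_ord_recr_lift (eq_bigr _ (fun j _ => ee' j)).
move=> /addnI e_max; apply/ffunP => i; apply: val_inj.
by case: (unliftP ord_max i) => [j ->|->]; [apply: ee' | apply: e_max].
Qed.

Definition top_deg := (\max_(e | r e != 0%R) total_deg e)%N.

Definition top_poly : {poly D} :=
  \sum_(e | total_deg e == top_deg) r e *: 'X^(kronecker e).

Lemma top_poly_neq0 e0 : r e0 != 0 -> top_poly != 0.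
Proof.
move=> re0; have r_supp : (0 < #|[pred e | r e != 0%R]|)%N by apply/card_gt0P; exists e0.
have [emax remax max_deg] := eq_bigmax_cond total_deg r_supp.
have coef_top : top_poly`_(kronecker emax) = r emax.
  rewrite /top_poly coef_sum (bigD1 emax) /=; last by rewrite /top_deg max_deg.
  rewrite coefZ coefXn eqxx mulr1 big1 ?addr0 // => e /andP[/eqP e_top e_ne].
  rewrite coefZ coefXn; case: eqP => [ke|_]; last by rewrite mulr0.
  by case/eqP: e_ne; apply: kronecker_inj => //; rewrite e_top /top_deg max_deg.
by apply: contraTneq remax => top0; rewrite inE negbK -coef_top top0 coef0.
Qed.

End Kronecker.

Section Shift.
Variables (D : unitRingType) (sigma : {rmorphism D -> D}).
Variables (S : nzRingType) (phi : {rmorphism D -> S}) (k : nat) (x : 'I_k.+1 -> S).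
Hypothesis x_comm : commuting_family x.
Hypothesis x_aut : forall i, automorphic phi sigma (x i).
Variables (N : nat) (z : D).
Hypothesis z_central_fixed : central_fixed sigma z.

Definition shift_coef (i : 'I_k.+1) : D :=
  oapp (fun j : 'I_k => z ^+ (N ^ j)) 1 (unlift ord_max i).

Local Notation w := (x ord_max).

Definition shifted i := x i - phi (shift_coef i) * w.

Definition shifted_gens (j : 'I_k) := shifted (lift ord_max j).

Local Notation Gy := (in_gen_subring phi shifted_gens).

Lemma shift_coef_central_fixed i : central_fixed sigma (shift_coef i).
Proof.
rewrite /shift_coef; case: unliftP => [j _|_] /=; last first.
  by split=> [r|]; rewrite ?mul1r ?mulr1 ?rmorph1.
have [zZ zF] := z_central_fixed; split=> [r|]; last by rewrite rmorphXn zF.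
by apply/commr_sym/commrX/commr_sym; rewrite /GRing.comm zZ.
Qed.

Lemma x_comm_fixed i g : sigma g = g -> GRing.comm (x i) (phi g).
Proof. by move=> gF; rewrite /GRing.comm x_aut gF. Qed.

Lemma central_comm_phi g h : central_fixed sigma g -> GRing.comm (phi g) (phi h).
Proof. by case=> gZ _; rewrite /GRing.comm -!rmorphM gZ. Qed.

Lemma x_comm_shifted i j : GRing.comm (x j) (shifted i).
Proof.
have [_ cF] := shift_coef_central_fixed i.
by rewrite /shifted; apply: commrB => //; apply: commrM; [apply: x_comm_fixed|].
Qed.

Lemma central_comm_shifted g i : central_fixed sigma g -> GRing.comm (phi g) (shifted i).
Proof.
move=> g_cf; have [_ gF] := g_cf; have [_ cF] := shift_coef_central_fixed i.
rewrite /shifted; apply: commrB; first exact/commr_sym/x_comm_fixed.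
by apply: commrM; [apply: central_comm_phi | apply/commr_sym/x_comm_fixed].
Qed.

Lemma shifted_comm i j : GRing.comm (shifted i) (shifted j).
Proof.
rewrite {2}/shifted; apply: commrB; first exact/commr_sym/x_comm_shifted.
apply: commrM; last exact/commr_sym/x_comm_shifted.
exact/commr_sym/central_comm_shifted/shift_coef_central_fixed.
Qed.

Lemma shifted_aut i : automorphic phi sigma (shifted i).
Proof.
have [cZ _] := shift_coef_central_fixed i.
by move=> b; rewrite /shifted mulrBl mulrBr x_aut -mulrA x_aut !mulrA -!rmorphM cZ.
Qed.

Lemma shifted_max : shifted ord_max = 0.
Proof. by rewrite /shifted /shift_coef unlift_none rmorph1 mul1r subrr. Qed.

Lemma gen_shifted_subring : is_subring Gy.
Proof. exact: in_gen_subring_subring. Qed.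

Lemma shifted_in_gen i : Gy (shifted i).
Proof.
case: (unliftP ord_max i) => [j ->|->]; first exact: (in_gen_subring_gen (a := shifted_gens) j).
by rewrite shifted_max; exact: subring0 gen_shifted_subring.
Qed.

Lemma x_shift i : x i = shifted i + phi (shift_coef i) * w.
Proof. by rewrite subrK. Qed.

Lemma w_normalizes_gen r : Gy r -> exists2 r', Gy r' & w * r = r' * w.
Proof.
move: r; apply: in_gen_subring_min (left_normalized_subring w gen_shifted_subring) _ _.
  by move=> d; exists (phi (sigma d)); [apply: in_gen_subring_phi | apply: x_aut].
by move=> j; exists (shifted_gens j); [apply: in_gen_subring_gen | apply: x_comm_shifted].
Qed.

Lemma shift_coef_fixed i : sigma (shift_coef i) = shift_coef i.
Proof. by case: (shift_coef_central_fixed i). Qed.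

Lemma pspan_lead_mulx i t g u : sigma g = g -> pspan Gy w t (u - phi g * w ^+ t) ->
  pspan Gy w t.+1 (x i * u - phi (shift_coef i * g) * w ^+ t.+1).
Proof.
move=> gF; rewrite [x i]x_shift rmorphM.
apply: (pspan_lead_mull gen_shifted_subring w_normalizes_gen).
- exact: shifted_in_gen.
- exact: in_gen_subring_phi.
- exact: in_gen_subring_phi.
- exact: x_comm_fixed.
Qed.

Lemma pspan_lead_monom (e : 'I_k.+1 -> nat) :
  pspan Gy w (\sum_i e i) (monom x e - phi (\prod_i shift_coef i ^+ e i) * w ^+ (\sum_i e i)).
Proof.
rewrite /monom; elim: (index_enum _) => [|i I IHI].
  by rewrite !big_nil rmorph1 mul1r expr0 subrr; apply/lspan0/gen_shifted_subring.
rewrite !big_cons; elim: (e i) => [|m IHm]; first by rewrite !expr0 !mul1r.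
rewrite addSn [x i ^+ _.+1]exprS [shift_coef i ^+ _.+1]exprS -!mulrA.
apply: pspan_lead_mulx => //.
rewrite rmorphM rmorphXn rmorph_prod shift_coef_fixed.
by congr (_ * _); apply: eq_bigr => j _; rewrite rmorphXn shift_coef_fixed.
Qed.

Lemma prod_shift_coef (e : {ffun 'I_k.+1 -> 'I_N}) :
  \prod_i shift_coef i ^+ e i = z ^+ kronecker e.
Proof.
rewrite big_ord_recr_lift /= /shift_coef unlift_none expr1n mulr1 -prodrXr.
by apply: eq_bigr => j _; rewrite liftK exprM.
Qed.

Variable r : {ffun 'I_k.+1 -> 'I_N} -> D.

Definition top_coef :=
  \sum_(e | total_deg e == top_deg r) r e * \prod_i shift_coef i ^+ e i.

Lemma top_poly_horner : (top_poly r).[z] = top_coef.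
Proof.
rewrite horner_sum; apply: eq_bigr => e _.
by rewrite hornerZ hornerXn prod_shift_coef.
Qed.

Lemma pspan_lead_relation :
  pspan Gy w (top_deg r) (\sum_e phi (r e) * monom x (fun i => nat_of_ord (e i))
                          - phi top_coef * w ^+ top_deg r).
Proof.
have Gy_subring := gen_shifted_subring.
have Gy_phi d : Gy (phi d) := in_gen_subring_phi d.
rewrite /top_coef rmorph_sum mulr_suml [X in _ - X]big_mkcond /= -sumrB.
apply: lspan_sum => // e _; case: ifP => [/eqP deg_e|deg_e].
  rewrite rmorphM -mulrA -mulrBr -deg_e.
  exact: lspan_mull (Gy_phi _) (pspan_lead_monom _).
rewrite subr0; have [->|re] := eqVneq (r e) 0; first by rewrite rmorph0 mul0r; apply: lspan0.
have lt_deg : (total_deg e < top_deg r)%N by rewrite ltn_neqAle deg_e leq_bigmax_cond.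
apply: lspan_mull (Gy_phi _) _ => //.
rewrite -(subrK (phi (\prod_i shift_coef i ^+ e i) * w ^+ total_deg e) (monom _ _)).
apply: lspanD => //; first exact: pspan_widen (ltnW lt_deg) (pspan_lead_monom _).
by apply: lspan_mull => //; apply: pspan_exp.
Qed.

Hypothesis hD : division_ring D.
Hypothesis r_rel :
  \sum_(e : {ffun 'I_k.+1 -> 'I_N}) phi (r e) * monom x (fun i => nat_of_ord (e i)) = 0.

Lemma w_integral : top_coef != 0 -> pspan Gy w (top_deg r) (w ^+ top_deg r).
Proof.
move=> top_neq0; have Gy_subring := gen_shifted_subring.
have := pspan_lead_relation; rewrite r_rel sub0r => /lspanN; rewrite opprK => /(_ Gy_subring).
move=> /(lspan_mull Gy_subring (in_gen_subring_phi top_coef^-1)).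
by rewrite mulrA -rmorphM mulVr ?rmorph1 ?mul1r //; apply: hD.
Qed.

Lemma finite_in_shifted : top_coef != 0 -> finite_in (in_gen_subring phi x) Gy.
Proof.
move=> top_neq0; exists (mkseq (GRing.exp w) (top_deg r)).
apply: (in_gen_subring_pspan gen_shifted_subring w_normalizes_gen (w_integral top_neq0)).
  exact: in_gen_subring_phi.
move=> i; exists (shifted i), (phi (shift_coef i)); split; last exact: x_shift.
  exact: shifted_in_gen.
exact: in_gen_subring_phi.
Qed.

End Shift.

Section Normalization.
Variables (D : unitRingType) (sigma : {rmorphism D -> D}).
Hypotheses (hD : division_ring D) (hF : center_fixed_infinite sigma).
Variables (S : nzRingType) (phi : {rmorphism D -> S}).

Lemma dependent_reduction k (x : 'I_k.+1 -> S) :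
  commuting_family x -> (forall i, automorphic phi sigma (x i)) -> ~ alg_indep phi x ->
  exists y : 'I_k -> S, [/\ commuting_family y, forall i, automorphic phi sigma (y i)
    & finite_in (in_gen_subring phi x) (in_gen_subring phi y)].
Proof.
move=> x_comm x_aut x_dep; have [N /not_all_ex_not[r r_dep]] := not_all_ex_not _ _ x_dep.
have [r_rel /not_all_ex_not[e0 /eqP re0]] := imply_to_and _ _ r_dep.
have [z z_cf top_z] := exists_central_fixed_nonroot hD hF (top_poly_neq0 re0).
exists (shifted_gens phi x N z); split.
- by move=> i j; apply: shifted_comm.
- by move=> i; apply: shifted_aut.
- by apply: (finite_in_shifted x_comm x_aut z_cf hD r_rel); rewrite -top_poly_horner.
Qed.

Lemma noether_normalization n (x : 'I_n -> S) :
  commuting_family x -> (forall i, automorphic phi sigma (x i)) ->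
  exists m (a : 'I_m -> S), [/\ commuting_family a, forall i, automorphic phi sigma (a i),
    alg_indep phi a & finite_in (in_gen_subring phi x) (in_gen_subring phi a)].
Proof.
elim: n x => [|k IHk] x x_comm x_aut.
  by exists 0%N, x; split=> //; [apply: alg_indep0 | apply/finite_in_refl/in_gen_subring_subring].
have [x_indep|x_dep] := classic (alg_indep phi x).
  by exists k.+1, x; split=> //; apply/finite_in_refl/in_gen_subring_subring.
have [y [y_comm y_aut xy]] := dependent_reduction x_comm x_aut x_dep.
have [m [a [a_comm a_aut a_indep ya]]] := IHk y y_comm y_aut.
by exists m, a; split=> //; apply: finite_in_trans ya xy; apply: in_gen_subring_subring.
Qed.

End Normalization.

Theorem theorem3p7 (D : unitRingType) (hD : division_ring D)
  (sigma : {rmorphism D -> D}) (hsigma : ring_aut sigma)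
  (hF : center_fixed_infinite sigma) (n : nat) :
  forall (S : nzRingType) (phi : {rmorphism D -> S}) (x : 'I_n -> S),
    skew_poly_quotient (fun _ : 'I_n => (sigma : D -> D)) phi x ->
    aut_normalizable phi.
Proof.
move=> S phi x [x_comm x_aut x_span].
have [m [a [a_comm a_aut a_indep [g xa]]]] := noether_normalization hD hF x_comm x_aut.
exists m, a, (fun _ => sigma); do 5 (split=> //).
exists g => s; have [N [r ->]] := x_span s.
by apply: xa; apply: in_gen_subring_skew_sum.
Qed.
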